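(* Let $G$ be a looped simple graph and write $M=M[IAS(G)]$ with rank function $r$. The following are equivalent: (1) $G$ is locally equivalent to a bipartite graph; (2) there are disjoint transversals $T_1,T_2$ of $W(G)$ with $r(T_1)+r(T_2)=|V(G)|$; (3) there are disjoint transversals $T_1,T_2$ with $M|(T_1\cup T_2)=(M|T_1)\oplus(M|T_2)$; (4) there are disjoint transversals $T_1,T_2$ with $M|T_1\cong(M|T_2)^*$.
   Context: A looped simple graph is a finite graph in which each vertex carries at most one loop and no two distinct vertices are joined by more than one edge; ''adjacent'' refers to distinct vertices joined by a non-loop edge. A bipartite graph here is a graph without loops whose vertex set can be partitioned into two sets each containing no two adjacent vertices. $A(G)$ is the $V(G)\times V(G)$ matrix over $GF(2)$ with diagonal entry $1$ exactly at looped vertices and off-diagonal entry $1$ exactly for adjacent pairs. $IAS(G)=(I\mid A(G)\mid A(G)+I)$ over $GF(2)$, rows indexed by $V(G)$; the $v$-columns of the three blocks are labelled $\phi_G(v),\chi_G(v),\psi_G(v)$. $M[IAS(G)]$ is the binary column matroid of $IAS(G)$ on $W(G)=\{\phi_G(v),\chi_G(v),\psi_G(v):v\in V(G)\}$. A transversal is a subset of $W(G)$ containing exactly one element of each vertex triple $\{\phi_G(v),\chi_G(v),\psi_G(v)\}$. $M|T$ denotes restriction, $\oplus$ direct sum, $^*$ the dual matroid. Local equivalence: $G_\ell^v$ complements the loop status of $v$; $G_s^v$ complements the adjacency status of every pair of distinct neighbors of $v$; $G_{ns}^v$ does this and also complements the loop status of every neighbor of $v$. $H$ is locally equivalent to $G$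 if obtained from $G$ by a finite sequence of such operations. *)

From HB Require Import structures.
From mathcomp Require Import all_boot all_order all_algebra.
Set Implicit Arguments. Unset Strict Implicit. Unset Printing Implicit Defensive.
Import GRing.Theory.
Local Open Scope ring_scope.

(* loopG v : v carries a loop;  adjG u v : u, v distinct and adjacent.
   Simplicity (adjG symmetric and irreflexive) is assumed where needed. *)
Record lgraph (n : nat) := LGraph { loopG : pred 'I_n; adjG : rel 'I_n }.

Definition simple_lgraph n (G : lgraph n) : Prop :=
  symmetric (adjG G) /\ irreflexive (adjG G).

Definition op_l n (v : 'I_n) (G : lgraph n) : lgraph n :=
  LGraph (fun x => if x == v then ~~ loopG G x else loopG G x) (adjG G).

Definition op_s n (v : 'I_n) (G : lgraph n) : lgraph n :=
  LGraph (loopG G)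
    (fun x y => adjG G x y (+) [&& x != y, adjG G v x & adjG G v y]).

Definition op_ns n (v : 'I_n) (G : lgraph n) : lgraph n :=
  LGraph (fun x => loopG G x (+) adjG G v x)
    (fun x y => adjG G x y (+) [&& x != y, adjG G v x & adjG G v y]).

Inductive loc_equiv n (G : lgraph n) : lgraph n -> Prop :=
  | le_refl : loc_equiv G G
  | le_l v H : loc_equiv G H -> loc_equiv G (op_l v H)
  | le_s v H : loc_equiv G H -> loc_equiv G (op_s v H)
  | le_ns v H : loc_equiv G H -> loc_equiv G (op_ns v H).

Definition bipartite n (G : lgraph n) : Prop :=
  (forall v, ~~ loopG G v) /\
  exists c : 'I_n -> bool, forall x y, adjG G x y -> c x != c y.

Definition adjmx n (G : lgraph n) : 'M['F_2]_n :=
  \matrix_(i, j) (if i == j then (loopG G i)%:R else (adjG G i j)%:R).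

Definition IAS n (G : lgraph n) : 'M['F_2]_(n, n + (n + n)) :=
  row_mx 1%:M (row_mx (adjmx G) (adjmx G + 1%:M)).

(* W(G) = 'I_n * 'I_3 ; (v,0) = phi_G(v), (v,1) = chi_G(v), (v,2) = psi_G(v) *)
Definition Wcol n (w : 'I_n * 'I_3) : 'I_(n + (n + n)) :=
  let: (v, k) := w in
  if val k == 0%N then lshift (n + n) v
  else if val k == 1%N then rshift n (lshift n v)
  else rshift n (rshift n v).

Record matroid (E : finType) := Matroid { ground : {set E}; mrank : {set E} -> nat }.

(* binary column matroid M[IAS(G)] on W(G): rank = dimension of the span
   of the columns labelled by the elements of X *)
Definition MIAS n (G : lgraph n) : matroid ('I_n * 'I_3)%type :=
  Matroid [set: 'I_n * 'I_3]
    (fun X => \rank (\sum_(w in X) <<row (Wcol w) (IAS G)^T>>)%MS).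

Definition restrict E (M : matroid E) (T : {set E}) : matroid E :=
  Matroid T (mrank M).

Definition dual E (M : matroid E) : matroid E :=
  Matroid (ground M)
    (fun X => (#|X| + mrank M (ground M :\: X) - mrank M (ground M))%N).

(* direct sum of two matroids with disjoint ground sets in the same type *)
Definition dsum E (M N : matroid E) : matroid E :=
  Matroid (ground M :|: ground N)
    (fun X => (mrank M (X :&: ground M) + mrank N (X :&: ground N))%N).

Definition meq E (M N : matroid E) : Prop :=
  ground M = ground N /\
  forall X : {set E}, X \subset ground M -> mrank M X = mrank N X.

Definition miso E (M N : matroid E) : Prop :=
  exists f : E -> E,
    [/\ {in ground M &, injective f}, f @: ground M = ground N &
        forall X : {set E}, X \subset ground M -> mrank N (f @: X) = mrank M X].

Definition transversalW n (T : {set 'I_n * 'I_3}) : Prop :=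
  forall v : 'I_n, #|[set k | (v, k) \in T]| = 1%N.

(* Any two of phi(v), chi(v), psi(v) span phi(v), so two disjoint transversals
   T1, T2 together span GF(2)^V; hence r(T1) + r(T2) = |V| exactly when their
   spans meet trivially, which is what the direct sum (3) says and what the
   isomorphism (4) forces by counting ranks.  A local operation acts on IAS(G)
   by an invertible row operation followed by a relabelling of each vertex
   triple, so it preserves all these ranks.  Operating at each vertex in turn,
   the label used by neither T1 nor T2 becomes psi everywhere; then T1 consists
   of phi(v) for v in a set Z and chi(v) otherwise, T2 the other way round, and
   r(T1) + r(T2) - |V| is the rank of the two diagonal blocks of the adjacency
   matrix with respect to Z, which vanish exactly when the graph is bipartite
   with sides Z and its complement.  For such a graph the two transversal
   matrices are orthogonal over GF(2), and orthogonal complementary subspaces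
   represent dual matroids, which gives (4). *)

From HB Require Import structures.
From mathcomp Require Import all_boot all_order all_algebra all_fingroup.
From mathcomp Require Import zify.
Set Implicit Arguments. Unset Strict Implicit. Unset Printing Implicit Defensive.
Import GRing.Theory.
Local Open Scope ring_scope.

Section SetMatrix.
Variables (F : fieldType) (n : nat).
Implicit Types (Z : {set 'I_n}).

Definition setmx Z : 'M[F]_n := diag_mx (\row_i (i \in Z)%:R).

Lemma setmxE Z i j : setmx Z i j = ((i == j) && (i \in Z))%:R.
Proof. by rewrite !mxE andbC; case: (i \in Z); rewrite ?mul0rn. Qed.

Lemma mul_setmx Z m (A : 'M_(n, m)) :
  setmx Z *m A = \matrix_(i, j) ((i \in Z)%:R * A i j).
Proof. by rewrite mul_diag_mx; apply/matrixP => i j; rewrite !mxE. Qed.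

Lemma mul_mx_setmx Z m (A : 'M_(m, n)) :
  A *m setmx Z = \matrix_(i, j) (A i j * (j \in Z)%:R).
Proof. by rewrite mul_mx_diag; apply/matrixP => i j; rewrite !mxE. Qed.

Lemma row_mul_setmx Z m (A : 'M_(n, m)) v :
  row v (setmx Z *m A) = (v \in Z)%:R *: row v A.
Proof. by apply/rowP => j; rewrite mul_setmx !mxE. Qed.

Lemma setmxT : setmx [set: 'I_n] = 1%:M.
Proof. by apply/matrixP => i j; rewrite setmxE inE andbT mxE. Qed.

Lemma setmx_add_compl Z : setmx Z + setmx (~: Z) = 1%:M.
Proof.
apply/matrixP => i j; rewrite [LHS]mxE !setmxE inE mxE.
by case: (i == j); case: (i \in Z); rewrite /= ?addr0 ?add0r.
Qed.

Lemma setmx_mul_compl Z : setmx Z *m setmx (~: Z) = 0.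
Proof.
apply/matrixP => i j; rewrite mul_setmx [LHS]mxE !setmxE inE mxE.
by case: (i \in Z); case: (i == j); rewrite /= ?mulr0 ?mul0r.
Qed.

Lemma setmx_compl_mul Z : setmx (~: Z) *m setmx Z = 0.
Proof. by rewrite -{2}[Z]setCK setmx_mul_compl. Qed.

Lemma setmx_idem Z : setmx Z *m setmx Z = setmx Z.
Proof.
apply/matrixP => i j; rewrite mul_setmx [LHS]mxE !setmxE.
by case: (i \in Z); case: (i == j); rewrite /= ?mulr0 ?mul0r ?mulr1.
Qed.

Lemma tr_setmx Z : (setmx Z)^T = setmx Z.
Proof. exact: tr_diag_mx. Qed.

Lemma sum_genmx_rows Z m (A : 'M_(n, m)) :
  ((\sum_(v in Z) <<row v A>>)%MS :=: setmx Z *m A)%MS.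
Proof.
apply/eqmxP/andP; split.
  apply/sumsmx_subP => v vZ; rewrite genmxE.
  by rewrite -[row v A]scale1r -[1]/((true : bool)%:R) -vZ -row_mul_setmx row_sub.
apply/row_subP => v; rewrite row_mul_setmx; case: (boolP (v \in Z)) => vZ.
  by rewrite scale1r (sumsmx_sup v) // genmxE.
by rewrite scale0r sub0mx.
Qed.

Lemma rank_setmx Z : \rank (setmx Z) = #|Z|.
Proof.
rewrite -[setmx Z]mulmx1 -(sum_genmx_rows Z 1%:M).
under eq_bigr do rewrite rowE mulmx1.
have /mxdirectP /= -> := mxdirect_delta F (in2W (@inj_id _)) (P := mem Z) (n := n).
rewrite -sum1_card; apply: eq_bigr => v _.
by rewrite mxrank_gen mxrank_delta.
Qed.

Lemma kermx_setmx Z : (kermx (setmx (~: Z)) :=: setmx Z)%MS.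
Proof.
apply/eqmx_sym/eqmxP.
have sZ : (setmx Z <= kermx (setmx (~: Z)))%MS.
  by apply/sub_kermxP; apply: setmx_mul_compl.
rewrite -(mxrank_leqif_eq sZ).2 mxrank_ker !rank_setmx.
by have := cardsC Z; rewrite card_ord; lia.
Qed.

Lemma capmx_eq0_split (P Q : 'M[F]_n) m1 m2 (U : 'M_(m1, n)) (V : 'M_(m2, n)) :
  P + Q = 1%:M -> U *m Q = 0 -> V *m P = 0 -> (U :&: V = 0)%MS.
Proof.
move=> PQ UQ VP; set K := (U :&: V)%MS.
have KQ : K *m Q = 0.
  by apply/sub_kermxP/(submx_trans (capmxSl U V)); apply/sub_kermxP.
have KP : K *m P = 0.
  by apply/sub_kermxP/(submx_trans (capmxSr U V)); apply/sub_kermxP.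
by rewrite -[K]mulmx1 -PQ mulmxDr KP KQ addr0.
Qed.

(* The rows of [setmx Z] are the unit vectors of [Z]; subtracting multiples of
   them clears the [Z]-columns of the other rows. *)
Lemma rank_setmx_add Z (M : 'M[F]_n) :
  \rank (setmx Z + setmx (~: Z) *m M)%R =
  (#|Z| + \rank (setmx (~: Z) *m M *m setmx (~: Z)))%N.
Proof.
set P := setmx Z; set Q := setmx (~: Z); set R := Q *m M *m Q.
have PQ : P *m Q = 0  by exact: setmx_mul_compl.
have QP : Q *m P = 0  by exact: setmx_compl_mul.
have PP : P *m P = P  by exact: setmx_idem.
have QQ : Q *m Q = Q  by exact: setmx_idem.
have PQ1 : P + Q = 1%:M  by exact: setmx_add_compl.
have eqXPR : ((P + Q *m M)%R :=: P + R)%MS.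
  apply/eqmxP/andP; split.
    have -> : P + Q *m M = (1%:M + Q *m M) *m P + R.
      by rewrite /R mulmxDl mul1mx -addrA -mulmxDr PQ1 mulmx1.
    by apply: addmx_sub_adds; rewrite ?submxMl.
  rewrite addsmx_sub; apply/andP; split.
    have eP : P *m (P + Q *m M) = P by rewrite mulmxDr PP mulmxA PQ mul0mx addr0.
    by rewrite -{1}eP submxMl.
  have eR : (Q - Q *m M *m P) *m (P + Q *m M) = R.
    rewrite /R mulmxDr !mulmxBl QP mulmxA QQ -(mulmxA _ P) PP -(mulmxA _ P) (mulmxA P) PQ.
    rewrite mul0mx mulmx0 subr0 sub0r addrC -{1}[Q *m M]mulmx1 -mulmxBr.
    by rewrite -PQ1 (addrC P) addrK.
  by rewrite -eR submxMl.
rewrite (eqXPR).1 mxrank_disjoint_sum ?rank_setmx //.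
by apply: capmx_eq0_split PQ1 PQ _; rewrite /R -mulmxA QP mulmx0.
Qed.

Lemma setmx_conj_eq0 Z (A : 'M[F]_n) :
  setmx Z *m A *m setmx Z = 0 <-> {in Z &, forall u v, A u v = 0}.
Proof.
split=> [A0 u v uZ vZ | A0].
  by move/matrixP/(_ u v): A0; rewrite mul_mx_setmx mul_setmx !mxE uZ vZ mulr1 mul1r.
apply/matrixP => u v; rewrite mul_mx_setmx mul_setmx !mxE.
case: (boolP (u \in Z)) => uZ; last by rewrite !mul0r.
case: (boolP (v \in Z)) => vZ; last by rewrite mulr0.
by rewrite A0 // mulr0 mul0r.
Qed.

Definition transvection v (a : 'rV[F]_n) : 'M[F]_n := 1%:M + delta_mx v 0 *m a.

Lemma mul_transvection (x a : 'rV[F]_n) v j :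
  (x *m transvection v a) 0 j = x 0 j + x 0 v * a 0 j.
Proof.
rewrite mulmxDr mulmx1 mulmxA -colE mxE; congr (_ + _).
by rewrite !mxE big_ord1 !mxE.
Qed.

Lemma transvection_unit v (a : 'rV[F]_n) : a 0 v = 0 -> transvection v a \in unitmx.
Proof.
move=> av0; suff /mulmx1_unit [] : transvection v a *m (1%:M - delta_mx v 0 *m a) = 1%:M by [].
have aE : a *m (delta_mx v 0 : 'cV_n) = 0.
  by apply/matrixP => i j; rewrite -colE !mxE !ord1 av0.
by rewrite mulmxBr mulmx1 mulmxDl mul1mx mulmxA -(mulmxA _ a) aE mulmx0 mul0mx addr0 addrK.
Qed.

Lemma trmx_mul_unit_eq0 m (X Y : 'M[F]_(m, n)) (B : 'M[F]_n) : B \in unitmx ->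
  (X *m B)^T *m (Y *m B) = 0 -> X^T *m Y = 0.
Proof.
move=> uB; rewrite trmx_mul mulmxA -(mulmxA B^T) => XYB0.
have uBt : B^T \in unitmx by rewrite unitmx_tr.
by rewrite -[X^T *m Y](mulKmx uBt) -[B^T *m _](mulmxK uB) XYB0 mul0mx mulmx0.
Qed.

(* [W^T] spans [kermx U], so with [d] the dimension of [setmx Z :&: W^T] we get
   [\rank (setmx Z *m U) = #|Z| - d] and [\rank W = \rank (setmx (~: Z) *m W) + d]. *)
Lemma rank_setmx_dual (U W : 'M[F]_n) Z :
  (\rank U + \rank W = n)%N -> U^T *m W = 0 ->
  (\rank (setmx Z *m U) + \rank W = #|Z| + \rank (setmx (~: Z) *m W))%N.
Proof.
move=> rkUW UW.
have kerU : (kermx U :=: W^T)%MS.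
  apply/eqmx_sym/eqmxP.
  have sWU : (W^T <= kermx U)%MS.
    by apply/sub_kermxP; rewrite -[U]trmxK -trmx_mul UW trmx0.
  by rewrite -(mxrank_leqif_eq sWU).2 mxrank_ker mxrank_tr; apply/eqP; lia.
have := mxrank_mul_ker (setmx Z) U.
rewrite rank_setmx (cap_eqmx (eqmx_refl _) kerU).
have := mxrank_mul_ker W^T (setmx (~: Z)).
rewrite (cap_eqmx (eqmx_refl _) (kermx_setmx Z)) capmxC mxrank_tr.
rewrite -(mxrank_tr (W^T *m _)) trmx_mul tr_setmx trmxK.
by move=> <- <-; rewrite addnA [in RHS]addnAC.
Qed.

End SetMatrix.

Arguments setmx {F n} Z.

Section MatroidRank.
Variable E : finType.
Implicit Types (M N : matroid E) (T X : {set E}).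

Lemma ground_restrict M T : ground (restrict M T) = T.
Proof. by []. Qed.

Lemma ground_dual M : ground (dual M) = ground M.
Proof. by []. Qed.

Lemma mrank_restrict M T X : mrank (restrict M T) X = mrank M X.
Proof. by []. Qed.

Lemma mrank_dsum M N X :
  mrank (dsum M N) X = (mrank M (X :&: ground M) + mrank N (X :&: ground N))%N.
Proof. by []. Qed.

Lemma mrank_dual M X :
  mrank (dual M) X = (#|X| + mrank M (ground M :\: X) - mrank M (ground M))%N.
Proof. by []. Qed.

End MatroidRank.

Section IASColumns.
Variable n : nat.
Implicit Types (G : lgraph n) (v : 'I_n) (X Y : {set 'I_n * 'I_3}) (t : 'I_n -> 'I_3).

Lemma F2_addxx (x : 'F_2) : x + x = 0.
Proof. exact: addrr_pchar2 (pchar_Fp (isT : prime 2)) x. Qed.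

Definition iphi : 'I_3 := @Ordinal 3 0 isT.
Definition ichi : 'I_3 := @Ordinal 3 1 isT.
Definition ipsi : 'I_3 := @Ordinal 3 2 isT.

(* Columns of [IAS G] are handled as row vectors, so that row operations on
   [IAS G] act by right multiplication. *)
Definition IAScol G (w : 'I_n * 'I_3) : 'rV['F_2]_n := \row_j IAS G j (Wcol w).

Lemma IAScolE G u (k : 'I_3) j : IAScol G (u, k) 0 j =
  if val k == 0%N then (j == u)%:R else if val k == 1%N then adjmx G j u
  else adjmx G j u + (j == u)%:R.
Proof.
rewrite mxE /Wcol /IAS.
case: ifP => _; first by rewrite row_mxEl mxE.
case: ifP => _; first by rewrite row_mxEr row_mxEl.
by rewrite !row_mxEr !mxE.
Qed.

Lemma adjmxE G i j :
  adjmx G i j = if i == j then (loopG G i)%:R else (adjG G i j)%:R.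
Proof. by rewrite mxE. Qed.

Lemma IAScol_phi G v : IAScol G (v, iphi) = row v 1%:M.
Proof. by apply/rowP => j; rewrite IAScolE !mxE /= eq_sym. Qed.

Definition span_cols G X : 'M['F_2]_n := (\sum_(w in X) <<IAScol G w>>)%MS.

Lemma mrank_MIAS G X : mrank (MIAS G) X = \rank (span_cols G X).
Proof.
rewrite /= /span_cols; congr (\rank _); apply: eq_bigr => w _; congr (<<_>>)%MS.
by apply/rowP => j; rewrite !mxE.
Qed.

Lemma span_colsS G X Y : X \subset Y -> (span_cols G X <= span_cols G Y)%MS.
Proof.
move=> sXY; apply/sumsmx_subP => w wX.
by apply: (sumsmx_sup w) (submx_refl _); apply: (subsetP sXY).
Qed.

Lemma span_colsU G X Y : [disjoint X & Y] ->
  span_cols G (X :|: Y) = (span_cols G X + span_cols G Y)%MS.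
Proof.
by move=> dXY; rewrite /span_cols -bigU //; apply: eq_bigl => w; rewrite inE.
Qed.

Definition graph_on t (Z : {set 'I_n}) := [set (v, t v) | v in Z].
Definition transversal t := graph_on t [set: 'I_n].

Lemma graph_on_inj t : injective (fun v => (v, t v)).
Proof. by move=> u v []. Qed.

Lemma mem_graph_on t Z w : (w \in graph_on t Z) = (w.2 == t w.1) && (w.1 \in Z).
Proof.
case: w => v k /=; apply/imsetP/andP => [[u uZ [-> ->]] | [/eqP -> vZ]] //.
by exists v.
Qed.

Lemma mem_transversal t w : (w \in transversal t) = (w.2 == t w.1).
Proof. by rewrite mem_graph_on inE andbT. Qed.

Lemma card_graph_on t Z : #|graph_on t Z| = #|Z|.
Proof. exact/card_imset/graph_on_inj. Qed.

Lemma transversalW_transversal t : transversalW (transversal t).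
Proof.
by move=> v; apply/eqP/cards1P; exists (t v); apply/setP => k; rewrite !inE mem_transversal.
Qed.

Lemma transversalWP T : transversalW T -> exists t, T = transversal t.
Proof.
move=> trT; exists (fun v => odflt iphi [pick k | (v, k) \in T]).
apply/setP => [[v k]]; rewrite mem_transversal /=.
have /eqP/cards1P [k0 Tv] := trT v.
have memT k' : ((v, k') \in T) = (k' == k0) by rewrite -in_set1 -Tv inE.
case: pickP => [k' /= | /(_ k0)]; last by rewrite memT eqxx.
by rewrite !memT => /eqP ->.
Qed.

Lemma disjoint_transversalP t1 t2 :
  reflect (forall v, t1 v != t2 v) [disjoint transversal t1 & transversal t2].
Proof.
apply: (iffP idP) => [dT v | neq].
  apply: contraTneq (dT) => eq12; apply/pred0Pn; exists (v, t1 v).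
  by rewrite /= !mem_transversal /= eq12 eqxx.
rewrite -setI_eq0; apply/eqP/setP => w; rewrite !inE !mem_transversal.
by apply/negP => /andP [/eqP -> /eqP e]; move: (neq w.1); rewrite e eqxx.
Qed.

Lemma subset_transversal t X :
  X \subset transversal t -> X = graph_on t [set v | (v, t v) \in X].
Proof.
move=> sX; apply/setP => w; rewrite mem_graph_on inE.
apply/idP/andP => [wX | [/eqP ew]]; last by rewrite -ew -surjective_pairing.
by have := subsetP sX _ wX; rewrite mem_transversal => /eqP <-; rewrite -surjective_pairing.
Qed.

Lemma transversalD t Z : transversal t :\: graph_on t Z = graph_on t (~: Z).
Proof.
by apply/setP => w; rewrite inE !mem_graph_on !inE; case: (w.2 == t w.1); rewrite /= ?andbT.
Qed.

Lemma transversal_pairP (P : {set 'I_n * 'I_3} -> {set 'I_n * 'I_3} -> Prop) :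
  (exists T1 T2, [/\ transversalW T1, transversalW T2, [disjoint T1 & T2] & P T1 T2]) <->
  (exists t1 t2, (forall v, t1 v != t2 v) /\ P (transversal t1) (transversal t2)).
Proof.
split=> [[T1 [T2 [/transversalWP [t1 ->] /transversalWP [t2 ->] d12 P12]]]|].
  by exists t1, t2; split => //; apply/disjoint_transversalP.
move=> [t1 [t2 [d12 P12]]]; exists (transversal t1), (transversal t2).
split; [exact: transversalW_transversal | exact: transversalW_transversal | | by []].
exact/disjoint_transversalP.
Qed.

Definition IAScols G t : 'M['F_2]_n := \matrix_(v, j) IAScol G (v, t v) 0 j.

Lemma row_IAScols G t v : row v (IAScols G t) = IAScol G (v, t v).
Proof. by apply/rowP => j; rewrite !mxE. Qed.

Lemma eq_IAScols G t t' : t =1 t' -> IAScols G t = IAScols G t'.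
Proof. by move=> tt'; apply/matrixP => v j; rewrite !mxE tt'. Qed.

Lemma span_cols_graph_on G t Z :
  (span_cols G (graph_on t Z) :=: setmx Z *m IAScols G t)%MS.
Proof.
rewrite /span_cols big_imset /=; last exact: in2W (@graph_on_inj t).
apply: eqmx_trans (sum_genmx_rows _ _); apply: eqmx_sums => v _.
by rewrite row_IAScols.
Qed.

Lemma span_cols_transversal G t : (span_cols G (transversal t) :=: IAScols G t)%MS.
Proof. by rewrite -[IAScols G t]mul1mx -setmxT; apply: span_cols_graph_on. Qed.

Lemma mrank_transversal G t : mrank (MIAS G) (transversal t) = \rank (IAScols G t).
Proof. by rewrite mrank_MIAS span_cols_transversal. Qed.

Definition complementary G t1 t2 := (\rank (IAScols G t1) + \rank (IAScols G t2) = n)%N.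

Lemma IAScol_phi_sub G v (k1 k2 : 'I_3) (S : 'M_n) : k1 != k2 ->
  (IAScol G (v, k1) <= S)%MS -> (IAScol G (v, k2) <= S)%MS ->
  (IAScol G (v, iphi) <= S)%MS.
Proof.
move=> k12.
have [-> // | k1phi] := eqVneq k1 iphi; have [-> // | k2phi] := eqVneq k2 iphi.
(* Over GF(2) any two of the three columns at [v] add up to the third. *)
have -> : IAScol G (v, iphi) = IAScol G (v, k1) + IAScol G (v, k2).
  apply/rowP => j; rewrite [RHS]mxE !IAScolE /=.
  move: k12 k1phi k2phi; case: k1 k2 => [[|[|[|//]]] ?] [[|[|[|//]]] ?] //= _ _ _.
    by rewrite addrA F2_addxx add0r.
  by rewrite addrC addrA F2_addxx add0r.
exact: addmx_sub.
Qed.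

Lemma IAScols_add_full G t1 t2 : (forall v, t1 v != t2 v) ->
  (IAScols G t1 + IAScols G t2 :=: (1%:M : 'M_n))%MS.
Proof.
move=> d12; apply/eqmxP; rewrite submx1 /=; apply/row_subP => v.
rewrite -(IAScol_phi G) (IAScol_phi_sub (d12 v)) //.
  by rewrite -row_IAScols (submx_trans (row_sub v _) (addsmxSl _ _)).
by rewrite -row_IAScols (submx_trans (row_sub v _) (addsmxSr _ _)).
Qed.

Lemma rank_IAScols_sum G t1 t2 : (forall v, t1 v != t2 v) ->
  (\rank (IAScols G t1) + \rank (IAScols G t2) =
   n + \rank (IAScols G t1 :&: IAScols G t2))%N.
Proof. by move=> d12; rewrite -mxrank_sum_cap (IAScols_add_full G d12) mxrank1. Qed.

Lemma complementary_IAScolsP G t1 t2 : (forall v, t1 v != t2 v) ->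
  complementary G t1 t2 <-> (IAScols G t1 :&: IAScols G t2 = 0)%MS.
Proof.
move=> d12; rewrite /complementary rank_IAScols_sum //.
split => [rk | ->]; last by rewrite mxrank0 addn0.
by apply/eqP; rewrite -mxrank_eq0; apply/eqP; lia.
Qed.

Lemma complementary_meq G t1 t2 : (forall v, t1 v != t2 v) ->
  complementary G t1 t2 ->
  meq (restrict (MIAS G) (transversal t1 :|: transversal t2))
      (dsum (restrict (MIAS G) (transversal t1)) (restrict (MIAS G) (transversal t2))).
Proof.
move=> d12 /(complementary_IAScolsP G d12) cap0; split => // X sX.
have dT : [disjoint transversal t1 & transversal t2] by apply/disjoint_transversalP.
rewrite mrank_restrict mrank_dsum !mrank_MIAS.
rewrite {1}(_ : X = X :&: transversal t1 :|: X :&: transversal t2).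
  rewrite span_colsU ?(disjointW (subsetIr _ _) (subsetIr _ _) dT) //.
  rewrite mxrank_disjoint_sum //; apply/eqP; rewrite -submx0 -cap0.
  by apply: capmxS; rewrite -span_cols_transversal span_colsS ?subsetIr.
by rewrite -setIUr; apply/esym/setIidPl.
Qed.

Lemma meq_complementary G t1 t2 : (forall v, t1 v != t2 v) ->
  meq (restrict (MIAS G) (transversal t1 :|: transversal t2))
      (dsum (restrict (MIAS G) (transversal t1)) (restrict (MIAS G) (transversal t2))) ->
  complementary G t1 t2.
Proof.
move=> d12 [_ /(_ _ (subxx _))]; rewrite mrank_restrict mrank_dsum !ground_restrict.
rewrite setUK (setIC _ (transversal t2)) setKU /complementary -!mrank_transversal => <-.
rewrite mrank_MIAS span_colsU; last exact/disjoint_transversalP.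
rewrite (adds_eqmx (span_cols_transversal G t1) (span_cols_transversal G t2)).
by rewrite (IAScols_add_full G d12) mxrank1.
Qed.

Lemma miso_complementary G t1 t2 :
  miso (restrict (MIAS G) (transversal t1)) (dual (restrict (MIAS G) (transversal t2))) ->
  complementary G t1 t2.
Proof.
move=> [f [_ fT1 rkf]]; have := rkf _ (subxx _); rewrite /complementary fT1 mrank_dual.
rewrite ground_dual !ground_restrict setDv !mrank_restrict !mrank_transversal.
rewrite card_graph_on cardsT card_ord mrank_MIAS /span_cols big_set0 mxrank0 addn0.
by have := rank_leq_col (IAScols G t2); lia.
Qed.

Lemma complementary_miso G t1 t2 :
  complementary G t1 t2 -> (IAScols G t1)^T *m IAScols G t2 = 0 ->
  miso (restrict (MIAS G) (transversal t1)) (dual (restrict (MIAS G) (transversal t2))).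
Proof.
move=> rk12 orth12; exists (fun w => (w.1, t2 w.1)); split.
- move=> [u k] [u' k']; rewrite !ground_restrict !mem_transversal /=.
  by move=> /eqP -> /eqP -> [->].
- rewrite ground_dual !ground_restrict; apply/setP => [[v k]]; rewrite mem_transversal /=.
  apply/imsetP/eqP => [[w _ [-> ->]] // | ->].
  by exists (v, t1 v); rewrite ?mem_transversal.
move=> X; rewrite ground_restrict => /subset_transversal ->.
set Z := [set v | _ \in X].
have -> : [set (w.1, t2 w.1) | w in graph_on t1 Z] = graph_on t2 Z.
  by rewrite /graph_on -imset_comp.
rewrite mrank_dual ground_restrict transversalD !mrank_restrict card_graph_on.
rewrite !mrank_MIAS !span_cols_graph_on setmxT mul1mx.
by have := rank_setmx_dual Z rk12 orth12; lia.
Qed.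

End IASColumns.

Section LocalEquivalence.
Variable n : nat.
Implicit Types (G H K : lgraph n) (u v : 'I_n) (t : 'I_n -> 'I_3).

Definition relabel (p : 'I_n -> {perm 'I_3}) (w : 'I_n * 'I_3) := (w.1, p w.1 w.2).

Lemma relabelM p q w : relabel (fun u => p u * q u)%g w = relabel q (relabel p w).
Proof. by rewrite /relabel /= permM. Qed.

Definition at_vertex v (s : {perm 'I_3}) u : {perm 'I_3} := if u == v then s else 1%g.

Definition toggle_loops (Z : pred 'I_n) G := LGraph (fun x => loopG G x (+) Z x) (adjG G).

Definition swap_on (Z : pred 'I_n) u : {perm 'I_3} := if Z u then tperm ichi ipsi else 1%g.

Lemma tpermv (x y z : 'I_3) : val (tperm x y z) =
  if val z == val x then val y else if val z == val y then val x else val z.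
Proof. by rewrite permE /= -!val_eqE; case: ifP => //; case: ifP. Qed.

Lemma adjmx_ext G G' : loopG G =1 loopG G' -> adjG G =2 adjG G' -> adjmx G = adjmx G'.
Proof. by move=> eL eA; apply/matrixP => i j; rewrite !adjmxE eL eA. Qed.

Lemma IAScol_adjmx G G' w : adjmx G = adjmx G' -> IAScol G w = IAScol G' w.
Proof. by rewrite /IAScol /IAS => ->. Qed.

Lemma IAScol_toggle_loops Z G w :
  IAScol (toggle_loops Z G) (relabel (swap_on Z) w) = IAScol G w.
Proof.
case: w => u k; apply/rowP => j; rewrite !IAScolE !adjmxE /relabel /swap_on /=.
case: (eqVneq j u) => [->|nju]; rewrite ?eqxx ?(negbTE nju) /=;
  case: (Z u); rewrite ?perm1 ?tpermv; case: k => [[|[|[|//]]] ?] //=;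
  case: (loopG G u); rewrite /= ?addr0 ?add0r ?F2_addxx //.
Qed.

Lemma IAScol_op_l v G w :
  IAScol (op_l v G) (relabel (at_vertex v (tperm ichi ipsi)) w) = IAScol G w.
Proof.
rewrite -(IAScol_toggle_loops (pred1 v) G w); apply: IAScol_adjmx; apply: adjmx_ext => // x /=.
by case: (x == v); rewrite ?addbT ?addbF.
Qed.

Definition nbr G v : 'rV['F_2]_n := \row_j (adjG G v j)%:R.

Definition ns_perm G v :=
  at_vertex v (if loopG G v then tperm iphi ichi else tperm iphi ipsi).

(* The transvection adds row [v] of [IAS G] to the rows of the neighbours of
   [v]: this turns [A] into [A + a a^T] for the neighbourhood vector [a], i.e.
   into the adjacency matrix of [op_ns v G], and permutes the columns at [v]. *)
Lemma IAScol_op_ns G v w : simple_lgraph G ->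
  IAScol (op_ns v G) (relabel (ns_perm G v) w) = IAScol G w *m transvection v (nbr G v).
Proof.
case: w => u k [sym irr]; apply/rowP => j.
rewrite mul_transvection !IAScolE !adjmxE /relabel /ns_perm /at_vertex /= mxE.
case: (eqVneq u v) => [->|nuv].
  rewrite ?irr (sym j v); case: (eqVneq j v) => [->|njv];
  rewrite ?eqxx ?irr ?(negbTE njv) /=;
  case: (loopG G v); rewrite tpermv; case: k => [[|[|[|//]]] ?] /=;
  case: (adjG G v j); rewrite /= ?addr0 ?add0r ?mulr0 ?mulr1 ?F2_addxx //; by apply/eqP.
rewrite perm1 ?[v == u]eq_sym ?(negbTE nuv).
case: k => [[|[|[|//]]] ?] /=; case: (eqVneq j u) => [->|nju]; rewrite ?eqxx ?(negbTE nju) /=;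
  case: (adjG G v u); case: (adjG G v j); case: (adjG G j u); case: (loopG G u);
  rewrite /= ?addr0 ?add0r ?mulr0 ?mulr1 ?F2_addxx //; by apply/eqP.
Qed.

(* [op_s v G] is [op_ns v G] with the loops at the neighbours of [v] toggled back. *)
Lemma IAScol_op_s G v w : simple_lgraph G ->
  IAScol (op_s v G) (relabel (fun u => ns_perm G v u * swap_on (adjG G v) u)%g w) =
  IAScol G w *m transvection v (nbr G v).
Proof.
move=> sG; rewrite relabelM -IAScol_op_ns // -[in RHS](IAScol_toggle_loops (adjG G v)).
by apply: IAScol_adjmx; apply: adjmx_ext => // x /=; rewrite addbK.
Qed.

Lemma simple_op_l v G : simple_lgraph G -> simple_lgraph (op_l v G).
Proof. by []. Qed.

Lemma simple_op_s v G : simple_lgraph G -> simple_lgraph (op_s v G).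
Proof.
move=> [sym irr]; split => [x y|x] /=; last by rewrite irr eqxx.
by rewrite sym eq_sym [adjG G v x && _]andbC.
Qed.

Lemma simple_op_ns v G : simple_lgraph G -> simple_lgraph (op_ns v G).
Proof. exact: simple_op_s. Qed.

(* [H] is locally equivalent to [G], and [IAS H] is obtained from [IAS G] by
   the row operation [B^T] followed by the relabelling [p] of [W(G)]. *)
Definition lc_witness G H p B := [/\ loc_equiv G H, simple_lgraph H, B \in unitmx &
  forall w, IAScol H (relabel p w) = IAScol G w *m B].

Lemma lc_witness_refl G : simple_lgraph G -> lc_witness G G (fun _ => 1%g) 1%:M.
Proof.
move=> sG; split; [exact: le_refl | by [] | exact: unitmx1 |].
by move=> [u k]; rewrite mulmx1 /relabel /= perm1.
Qed.

Lemma lc_witness_step G H K p B q C : lc_witness G H p B ->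
  loc_equiv G K -> simple_lgraph K -> C \in unitmx ->
  (forall w, IAScol K (relabel q w) = IAScol H w *m C) ->
  lc_witness G K (fun u => p u * q u)%g (B *m C).
Proof.
move=> [_ _ uB HB] lK sK uC KC; split; rewrite ?unitmx_mul ?uB //.
by move=> w; rewrite relabelM KC HB mulmxA.
Qed.

Lemma lc_witness_op_l G H p B v : lc_witness G H p B ->
  lc_witness G (op_l v H) (fun u => p u * at_vertex v (tperm ichi ipsi) u)%g B.
Proof.
move=> wH; have [lH sH _ _] := wH; rewrite -[B]mulmx1.
apply: lc_witness_step wH (le_l v lH) (simple_op_l v sH) (unitmx1 _ _) _.
by move=> w; rewrite mulmx1 IAScol_op_l.
Qed.

Lemma nbr_self G v : simple_lgraph G -> nbr G v 0 v = 0.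
Proof. by move=> [_ irr]; rewrite mxE irr. Qed.

Lemma lc_witness_op_ns G H p B v : lc_witness G H p B ->
  lc_witness G (op_ns v H) (fun u => p u * ns_perm H v u)%g
    (B *m transvection v (nbr H v)).
Proof.
move=> wH; have [lH sH _ _] := wH.
apply: lc_witness_step wH (le_ns v lH) (simple_op_ns v sH) _ _.
  exact/transvection_unit/nbr_self.
by move=> w; apply: IAScol_op_ns.
Qed.

Lemma lc_witness_op_s G H p B v : lc_witness G H p B ->
  lc_witness G (op_s v H) (fun u => p u * (ns_perm H v u * swap_on (adjG H v) u))%g
    (B *m transvection v (nbr H v)).
Proof.
move=> wH; have [lH sH _ _] := wH.
apply: lc_witness_step wH (le_s v lH) (simple_op_s v sH) _ _.
  exact/transvection_unit/nbr_self.
by move=> w; apply: IAScol_op_s.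
Qed.

Lemma loc_equiv_witness G H : simple_lgraph G -> loc_equiv G H ->
  exists p B, lc_witness G H p B.
Proof.
move=> sG; elim=> [|v K _ [p [B wK]]|v K _ [p [B wK]]|v K _ [p [B wK]]].
- by exists (fun _ => 1%g), 1%:M; apply: lc_witness_refl.
- by eexists; eexists; exact: lc_witness_op_l v wK.
- by eexists; eexists; exact: lc_witness_op_s v wK.
- by eexists; eexists; exact: lc_witness_op_ns v wK.
Qed.

Lemma IAScols_relabel G H p B t : lc_witness G H p B ->
  IAScols H (fun v => p v (t v)) = IAScols G t *m B.
Proof.
by move=> [_ _ _ HB]; apply/row_matrixP => v; rewrite row_mul !row_IAScols -HB.
Qed.

Lemma rank_IAScols_relabel G H p B t : lc_witness G H p B ->
  \rank (IAScols H (fun v => p v (t v))) = \rank (IAScols G t).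
Proof.
by move=> wH; have [_ _ uB _] := wH; rewrite (IAScols_relabel _ wH) mxrankMfree ?row_free_unit.
Qed.

Lemma lc_witness_avoid_phi G H p B v k : lc_witness G H p B ->
  exists H' p' B', [/\ lc_witness G H' p' B', p' v k != iphi &
                      forall u, u != v -> p' u = p u].
Proof.
move=> wH; have [pk | pk] := eqVneq (p v k) iphi; last by exists H, p, B.
exists (op_ns v H); do 2 eexists; split; first exact: lc_witness_op_ns v wH.
  by rewrite permM pk /ns_perm /at_vertex eqxx; case: (loopG H v); rewrite tpermL.
by move=> u nuv; rewrite /ns_perm /at_vertex (negbTE nuv) mulg1.
Qed.

Lemma lc_witness_to_psi G H p B v k : lc_witness G H p B ->
  exists H' p' B', [/\ lc_witness G H' p' B', p' v k = ipsi &
                      forall u, u != v -> p' u = p u].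
Proof.
move=> wH; have [H1 [p1 [B1 [w1 nphi same1]]]] := lc_witness_avoid_phi v k wH.
have [pk | npsi] := eqVneq (p1 v k) ipsi; first by exists H1, p1, B1.
have pk : p1 v k = ichi.
  by move: nphi npsi; case: (p1 v k) => [[|[|[|//]]] ?] //= _ _; apply: val_inj.
exists (op_l v H1); do 2 eexists; split; first exact: lc_witness_op_l v w1.
  by rewrite permM pk /at_vertex eqxx tpermL.
by move=> u nuv; rewrite /at_vertex (negbTE nuv) mulg1 same1.
Qed.

Lemma normalize_labels G (k : 'I_n -> 'I_3) : simple_lgraph G ->
  exists H p B, lc_witness G H p B /\ forall v, p v (k v) = ipsi.
Proof.
move=> sG; suff [H [p [B [wH kpsi]]]] : exists H p B,
    lc_witness G H p B /\ {in enum 'I_n, forall v, p v (k v) = ipsi}.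
  by exists H, p, B; split => // v; apply/kpsi/mem_enum.
elim: (enum 'I_n) => [|v s [H [p [B [wH kpsi]]]]].
  by exists G, (fun _ => 1%g), 1%:M; split => //; apply: lc_witness_refl.
have [H' [p' [B' [wH' pv same]]]] := lc_witness_to_psi v (k v) wH.
exists H', p', B'; split => // u; rewrite inE.
by case: (eqVneq u v) => [-> //| nuv] /= us; rewrite same ?kpsi.
Qed.

End LocalEquivalence.

Section Bipartition.
Variable n : nat.
Implicit Types (G H : lgraph n) (u v : 'I_n) (t : 'I_n -> 'I_3).

Definition side (Z : {set 'I_n}) v : 'I_3 := if v \in Z then iphi else ichi.

Lemma IAScols_side G Z : IAScols G (side Z) = setmx Z + setmx (~: Z) *m (adjmx G)^T.
Proof.
apply/matrixP => v j; rewrite [LHS]mxE IAScolE [RHS]mxE mul_setmx setmxE !mxE /side inE.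
by case: (v \in Z); rewrite /= ?mul1r ?mul0r ?andbT ?andbF ?mulr0n ?addr0 ?add0r // eq_sym.
Qed.

Lemma adjmx_tr G : simple_lgraph G -> (adjmx G)^T = adjmx G.
Proof.
move=> [sym _]; apply/matrixP => i j; rewrite mxE !adjmxE eq_sym sym.
by case: eqVneq => [->|].
Qed.

Lemma rank_IAScols_sides G Z : simple_lgraph G ->
  (\rank (IAScols G (side Z)) + \rank (IAScols G (side (~: Z))) =
   n + \rank (setmx Z *m adjmx G *m setmx Z)
     + \rank (setmx (~: Z) *m adjmx G *m setmx (~: Z)))%N.
Proof.
move=> sG; rewrite !IAScols_side adjmx_tr // !rank_setmx_add setCK.
by have := cardsC Z; rewrite card_ord; lia.
Qed.

Definition bipartition G (Z : {set 'I_n}) :=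
  forall u v, (u \in Z) = (v \in Z) -> adjmx G u v = 0.

Lemma complementary_sidesP G Z : simple_lgraph G ->
  complementary G (side Z) (side (~: Z)) <-> bipartition G Z.
Proof.
move=> sG; rewrite /complementary rank_IAScols_sides //; split => [rk | hZ].
  have /andP [] : (\rank (setmx Z *m adjmx G *m setmx Z) == 0)%N &&
                  (\rank (setmx (~: Z) *m adjmx G *m setmx (~: Z)) == 0)%N.
    by rewrite -addn_eq0; apply/eqP; lia.
  rewrite !mxrank_eq0 => /eqP /setmx_conj_eq0 A1 /eqP /setmx_conj_eq0 A2 u v.
  case: (boolP (u \in Z)) => uZ vZ; first by apply: A1; rewrite -?vZ.
  by apply: A2; rewrite inE -?vZ.
have /setmx_conj_eq0 -> : {in Z &, forall u v, adjmx G u v = 0}.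
  by move=> u v uZ vZ; apply: hZ; rewrite uZ vZ.
have /setmx_conj_eq0 -> : {in ~: Z &, forall u v, adjmx G u v = 0}.
  by move=> u v; rewrite !inE => /negbTE uZ /negbTE vZ; apply: hZ; rewrite uZ vZ.
by rewrite !mxrank0 !addn0.
Qed.

Lemma bipartiteP G : simple_lgraph G -> bipartite G <-> exists Z, bipartition G Z.
Proof.
move=> [_ irr]; split => [[noloop [c hc]] | [Z hZ]].
  exists [set v | c v] => u v; rewrite !inE adjmxE => cuv.
  case: eqVneq => [_ | _]; first by rewrite (negbTE (noloop u)).
  by case a: (adjG G u v) => //; move: (hc _ _ a); rewrite cuv eqxx.
split => [v | ].
  by have := hZ v v erefl; rewrite adjmxE eqxx; case: (loopG G v) => // /eqP.
exists (fun v => v \in Z) => x y axy; apply/negP => /eqP cxy.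
have := hZ x y cxy; rewrite adjmxE; case: eqVneq => [exy | _].
  by rewrite exy irr in axy.
by rewrite axy => /eqP.
Qed.

Lemma orthogonal_IAScols_sides G Z : simple_lgraph G -> bipartition G Z ->
  (IAScols G (side Z))^T *m IAScols G (side (~: Z)) = 0.
Proof.
move=> sG hZ; rewrite !IAScols_side adjmx_tr // setCK.
rewrite [(_ + _)^T]raddfD /= trmx_mul !tr_setmx adjmx_tr //.
rewrite mulmxDl !mulmxDr setmx_mul_compl add0r.
rewrite mulmxA setmx_idem -(mulmxA (adjmx G)) setmx_idem (mulmxA (adjmx G *m _)).
rewrite -(mulmxA (adjmx G) (setmx (~: Z))) setmx_compl_mul mulmx0 mul0mx addr0.
(* In what remains, [setmx Z *m A + A *m setmx (~: Z)], the diagonal blocks of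
   [A] vanish and the [Z]-by-[~: Z] block occurs twice, cancelling over GF(2). *)
apply/matrixP => i j.
rewrite [LHS]mxE mul_mx_setmx mul_setmx !mxE inE.
case: (boolP (i \in Z)) => iZ; case: (boolP (j \in Z)) => jZ;
  rewrite /= ?mul1r ?mul0r ?mulr1 ?mulr0 ?add0r ?addr0 ?F2_addxx //.
all: by rewrite -adjmxE hZ // ?(negbTE iZ) ?(negbTE jZ) ?iZ ?jZ.
Qed.

Lemma bipartite_complementary G H : simple_lgraph G -> loc_equiv G H -> bipartite H ->
  exists t1 t2, (forall v, t1 v != t2 v) /\ complementary G t1 t2.
Proof.
move=> sG lH bH; have [p [B wH]] := loc_equiv_witness sG lH; have [_ sH _ _] := wH.
have [Z hZ] := (bipartiteP sH).1 bH.
exists (fun v => (p v)^-1%g (side Z v)), (fun v => (p v)^-1%g (side (~: Z) v)); split.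
  by move=> v; rewrite (inj_eq perm_inj) /side inE; case: (v \in Z).
rewrite /complementary -!(rank_IAScols_relabel _ wH).
rewrite !(eq_IAScols _ (fun v => permKV (p v) _)).
exact/complementary_sidesP.
Qed.

Definition third (a b : 'I_3) : 'I_3 :=
  if (a != iphi) && (b != iphi) then iphi
  else if (a != ichi) && (b != ichi) then ichi else ipsi.

Lemma third_neq (a b : 'I_3) : a != b -> third a b != a /\ third a b != b.
Proof. by case: a b => [[|[|[|//]]] ?] [[|[|[|//]]] ?]. Qed.

Lemma side_labels (a b : 'I_3) : a != ipsi -> b != ipsi -> a != b ->
  a = (if a == iphi then iphi else ichi) /\ b = (if a != iphi then iphi else ichi).
Proof. by case: a b => [[|[|[|//]]] ?] [[|[|[|//]]] ?] //= *; split; apply: val_inj. Qed.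

Lemma complementary_bipartite G t1 t2 : simple_lgraph G -> (forall v, t1 v != t2 v) ->
  complementary G t1 t2 ->
  (exists H, loc_equiv G H /\ bipartite H) /\ (IAScols G t1)^T *m IAScols G t2 = 0.
Proof.
move=> sG d12 rk12.
have [H [p [B [wH p3]]]] := normalize_labels (fun v => third (t1 v) (t2 v)) sG.
have [lH sH uB _] := wH.
set Z := [set v | p v (t1 v) == iphi].
have labels v : p v (t1 v) = side Z v /\ p v (t2 v) = side (~: Z) v.
  have [n1 n2] := third_neq (d12 v).
  rewrite /side !inE; apply: side_labels; rewrite ?(inj_eq perm_inj) //.
    by rewrite -(p3 v) (inj_eq perm_inj) eq_sym.
  by rewrite -(p3 v) (inj_eq perm_inj) eq_sym.
have e1 := eq_IAScols H (fun v => (labels v).1).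
have e2 := eq_IAScols H (fun v => (labels v).2).
have hZ : bipartition H Z.
  apply/(complementary_sidesP _ sH).
  by rewrite /complementary -e1 -e2 !(rank_IAScols_relabel _ wH).
split; first by exists H; split => //; apply/(bipartiteP sH); exists Z.
apply: (trmx_mul_unit_eq0 uB); rewrite -!(IAScols_relabel _ wH) e1 e2.
exact: orthogonal_IAScols_sides.
Qed.

End Bipartition.

Theorem corollary5p3 (n : nat) (G : lgraph n) (HG : simple_lgraph G) :
  let M := MIAS G in
  [<-> exists H, loc_equiv G H /\ bipartite H;
       exists T1 T2 : {set 'I_n * 'I_3}, [/\ transversalW T1, transversalW T2, [disjoint T1 & T2] &
                        (mrank M T1 + mrank M T2)%N = n];
       exists T1 T2 : {set 'I_n * 'I_3}, [/\ transversalW T1, transversalW T2, [disjoint T1 & T2] &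
                        meq (restrict M (T1 :|: T2))
                            (dsum (restrict M T1) (restrict M T2))];
       exists T1 T2 : {set 'I_n * 'I_3}, [/\ transversalW T1, transversalW T2, [disjoint T1 & T2] &
                        miso (restrict M T1) (dual (restrict M T2))]].
Proof.
move=> M; tfae.
- move=> [H [lH bH]]; have [t1 [t2 [d12 rk12]]] := bipartite_complementary HG lH bH.
  by apply/transversal_pairP; exists t1, t2; rewrite !mrank_transversal.
- move=> /transversal_pairP [t1 [t2 [d12]]]; rewrite !mrank_transversal => rk12.
  by apply/transversal_pairP; exists t1, t2; split => //; apply: complementary_meq.
- move=> /transversal_pairP [t1 [t2 [d12 /(meq_complementary d12) rk12]]].
  apply/transversal_pairP; exists t1, t2; split => //.
  by apply: complementary_miso rk12 (complementary_bipartite HG d12 rk12).2.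
- move=> /transversal_pairP [t1 [t2 [d12 /miso_complementary rk12]]].
  exact: (complementary_bipartite HG d12 rk12).1.
Qed.
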